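(* Let $\Theta$ and $\Theta'$ be two flow rules defined respectively by positive measurable functions $\phi$ and $\phi'$ via $\Theta_T(i) = \phi(T[i]) / \sum_{j=1}^{\nu_T(\varnothing)} \phi(T[j])$ and $\Theta'_T(i) = \phi'(T[i]) / \sum_{j=1}^{\nu_T(\varnothing)} \phi'(T[j])$ for $1 \leq i \leq \nu_T(\varnothing)$. Then $\Theta_T = \Theta'_T$ almost surely if and only if the functions $\phi$ and $\phi'$ are proportional.
   Context: Trees are rooted, planar, locally finite, leafless trees (Neveu formalism: subsets of finite words on $\{1,2,\dots\}$ containing the root $\varnothing$), each vertex $x$ carrying a non-negative real mark. For a vertex $x$ of a marked tree $t$, $t[x]$ is the reindexed marked subtree rooted at $x$, and $\nu_t(x)$ is the number of children of $x$. Let $\mathbf{p}=(p_k)_{k\ge0}$ be a reproduction law with $p_0 = 0$, $p_1 < 1$ and finite mean $m$, and let $\Gamma$ be a random variable with values in $\mathbb{R}_+$. A $(\Gamma,\mathbf{p})$-Galton-Watson tree $T$ is a Galton-Watson tree with reproduction law $\mathbf{p}$ carrying i.i.d. marks distributed as $\Gamma$; its law is denoted $\mathrm{GW}$. A flow on a tree $t$ is a function $\theta: t\to[0,1]$ with $\theta(\varnothing)=1$ and $\theta(x)=\sum_{i=1}^{\nu_t(x)}\theta(xi)$; a ($\mathrm{GW}$-)flow rule is a measurable map $t\mapsto\Theta_t$, defined on a Borel set of full $\mathrm{GW}$-measure, assigning to each tree a flow with $\Theta_t(x)>0$ for all $x$ and satisfying the consistency relation $\Theta_{t[x]}(y)=\Theta_t(xy)/\Theta_t(x)$.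 Here $\phi$ and $\phi'$ are measurable positive functions defined on a Borel set of marked leafless trees of full $\mathrm{GW}$-measure, and the flow rules are determined on the first generation by the displayed formula and extended by consistency. *)

From HB Require Import structures.
From mathcomp Require Import all_boot all_order all_algebra.
From mathcomp Require Import all_classical all_reals all_analysis.
Set Implicit Arguments. Unset Strict Implicit. Unset Printing Implicit Defensive.
Import Order.TTheory GRing.Theory Num.Theory.
Local Open Scope classical_set_scope.
Local Open Scope ring_scope.

(* Words of the Neveu/Ulam-Harris formalism, written root-first:
   the word i1 i2 ... in is the list [:: i1; i2; ...; in], children are
   labelled 1, 2, ..., nu. *)
Definition word := seq nat.

(* A (raw) marked labelling: number of children and mark at every word. *)
Definition lab (R : Type) := ((word -> nat) * (word -> R))%type.

Fixpoint in_tree (nu : word -> nat) (x : word) : bool :=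
  match x with
  | [::] => true
  | i :: y => (0 < i <= nu [::])%N && in_tree (fun z => nu (i :: z)) y
  end.

Definition subtree R (t : lab R) (x : word) : lab R :=
  (fun y => t.1 (x ++ y), fun y => t.2 (x ++ y)).

(* canonical representative of the marked tree generated by a labelling:
   values outside the tree are set to 0 *)
Definition prune (R : realType) (t : lab R) : lab R :=
  (fun x => if in_tree t.1 x then t.1 x else 0%N,
   fun x => if in_tree t.1 x then t.2 x else 0).

Definition lab_gen (R : realType) : set (set (lab R)) :=
  [set A | exists x k, A = [set t | t.1 x = k]] `|`
  [set A | exists x (B : set R), measurable B /\ A = [set t | B (t.2 x)]].

Definition lab_measurable (R : realType) (f : lab R -> R) : Prop :=
  forall B : set R, measurable B -> <<s @lab_gen R >> (f @^-1` B).

(* The flow rule determined by phi on the first generation,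
   Theta_t(i) = phi(t[i]) / sum_{j=1}^{nu_t(root)} phi(t[j]),
   extended to all vertices by the consistency relation
   Theta_t(i y) = Theta_t(i) * Theta_{t[i]}(y). *)
Fixpoint flow_of (R : realType) (phi : lab R -> R) (t : lab R) (x : word) : R :=
  match x with
  | [::] => 1
  | i :: y => phi (subtree t [:: i]) /
              (\sum_(1 <= j < (t.1 [::]).+1) phi (subtree t [:: j]))
              * flow_of phi (subtree t [:: i]) y
  end.

Definition mutually_independent (d : measure_display) (Omega : measurableType d)
  (R : realType) (P : probability Omega R) (I : eqType)
  (E : I -> set (set Omega)) : Prop :=
  forall (F : seq I) (A : I -> set Omega), uniq F ->
    (forall i, i \in F -> E i (A i)) ->
    fine (P (\bigcap_(i in [set` F]) A i)) = \prod_(i <- F) fine (P (A i)).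

Definition gw_sigma (d : measure_display) (Omega : measurableType d)
  (R : realType) (N : word -> Omega -> nat) (G : word -> Omega -> R)
  (i : word * bool) : set (set Omega) :=
  if i.2 then [set A | exists B : set R, measurable B /\ A = G i.1 @^-1` B]
  else [set A | exists B : set nat, A = N i.1 @^-1` B].

Definition gw_tree (Omega : Type) (R : realType) (N : word -> Omega -> nat)
  (G : word -> Omega -> R) (w : Omega) : lab R :=
  prune (fun x => N x w, fun x => G x w).

From HB Require Import structures.
From mathcomp Require Import all_boot all_order all_algebra.
From mathcomp Require Import all_classical all_reals all_analysis.
From mathcomp Require Import measurable_realfun lra.
Import Order.TTheory GRing.Theory Num.Theory.
Local Open Scope classical_set_scope.
Local Open Scope ring_scope.

(* A flow rule given by phi sees phi only through the normalised values
   phi(T[i]) / sum_j phi(T[j]); hence Theta = Theta' forces the ratio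
   r = phi'/phi to take the same value on the subtrees T[1] and T[2] whenever
   the root has at least two children.  These two subtrees and the root degree
   are independent and each subtree is distributed as T, so for every level a
   P(r(T) <= a) P(r(T) > a) P(nu >= 2) = 0.  As P(nu >= 2) > 0 (p_0 = 0,
   p_1 < 1), the law of r(T) is a point mass at some c > 0, i.e. phi' = c phi
   almost surely.  Conversely, if phi' = c phi almost surely then, each subtree
   T[v] being distributed as T and the vertices being countably many,
   phi' = c phi holds almost surely on every subtree at once, and then the
   normalising sums of the two flow rules cancel. *)

Set Implicit Arguments. Unset Strict Implicit. Unset Printing Implicit Defensive.

Section probability_facts.
Context d (T : measurableType d) (R : realType) (P : probability T R).

Lemma setT_not_negligible : ~ P.-negligible setT.
Proof.
move=> /(negligibleP _ measurableT) P0.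
by have /eqP := etrans (esym (probability_setT P)) P0; rewrite onee_eq0.
Qed.

Lemma ae_exists (Q : T -> Prop) : {ae P, forall w, Q w} -> exists w, Q w.
Proof.
move=> aeQ; apply: contrapT => noQ; apply: setT_not_negligible.
by apply: negligibleS aeQ => w _ Qw; apply: noQ; exists w.
Qed.

Lemma cover_not_negligible (F : (set T)^nat) :
  setT `<=` \bigcup_k F k -> exists k, ~ P.-negligible (F k).
Proof.
move=> covF; apply: contrapT => /forallNP allF; apply: setT_not_negligible.
apply: (negligibleS covF); apply: negligible_bigcup => k.
exact: contrapT (allF k).
Qed.

(* [a |-> P (a `&` b)] and [a |-> P a * P b] are finite measures that agree on
   the pi-system [A]. *)
Lemma g_sigma_indep_set (A : set (set T)) (b : set T) :
  A `<=` measurable -> setI_closed A -> A setT -> measurable b ->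
  (forall a, A a -> P (a `&` b) = (P a * P b)%E) ->
  forall a, <<s A >> a -> P (a `&` b) = (P a * P b)%E.
Proof.
move=> Am AI AT mb Ab.
have Pb : P b = (fine (P b))%:E by rewrite fineK // fin_num_measure.
pose r := NngNum (fine_ge0 (measure_ge0 P b)).
suff eq_restr : forall a, <<s A >> a -> mrestr P mb a = mscale r P a.
  by move=> a /eq_restr; rewrite /mrestr /mscale /= => ->; rewrite Pb muleC.
apply: (g_sigma_algebra_measure_unique A Am (fun=> setT)) => //.
- by apply/seteqP; split => // w _; exists 0%N.
- move=> a Aa; transitivity (P (a `&` b)) => //.
  by transitivity ((fine (P b))%:E * P a)%E => //; rewrite Ab // -Pb muleC.
- move=> _; have mTb := measurableI _ _ (@measurableT _ T) mb.
  by have /fin_numPlt/andP[_ lt] := fin_num_measure P _ mTb; exact: lt.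
Qed.

Lemma g_sigma_indep (A B : set (set T)) :
  A `<=` measurable -> setI_closed A -> A setT ->
  B `<=` measurable -> setI_closed B -> B setT ->
  (forall a b, A a -> B b -> P (a `&` b) = (P a * P b)%E) ->
  forall a b, <<s A >> a -> <<s B >> b -> P (a `&` b) = (P a * P b)%E.
Proof.
move=> Am AI AT Bm BI BT AB a b sAa sBb.
have sAm : <<s A >> `<=` measurable.
  by apply: smallest_sub; [exact: sigma_algebra_measurable|exact: Am].
rewrite setIC muleC; apply: (g_sigma_indep_set Bm BI BT (sAm _ sAa)) => // b' Bb'.
rewrite setIC muleC.
exact: g_sigma_indep_set Am AI AT (Bm _ Bb') (fun a' Aa' => AB a' b' Aa' Bb') _ sAa.
Qed.

End probability_facts.

Section zero_one_levels.
Context d (T : measurableType d) (R : realType) (P : probability T R).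
Variable X : T -> R.
Hypothesis mX : forall a, measurable [set w | X w <= a].
Hypothesis zero_one : forall a,
  P [set w | X w <= a] = 0%E \/ P (~` [set w | X w <= a]) = 0%E.

Let null_level a := P [set w | X w <= a] = 0%E.

Let null_level_le a b : a <= b -> null_level b -> null_level a.
Proof.
by move=> ab; apply: subset_measure0 => // w /= Xa; exact: le_trans ab.
Qed.

Let has_sup_null_level : has_sup null_level.
Proof.
have [m nullm] : exists m : nat, ~ P.-negligible (~` [set w | X w <= - m%:R]).
  apply: cover_not_negligible => w _; exists (Num.truncn (- X w)).+1 => // Xm.
  have := truncnS_gt (- X w); rewrite ltrNl => /(le_lt_trans Xm).
  by rewrite ltxx.
have [n nulln] : exists n : nat, ~ P.-negligible [set w | X w <= n%:R].
  apply: cover_not_negligible => w _; exists (Num.truncn (X w)).+1 => //.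
  exact/ltW/truncnS_gt.
split; first exists (- m%:R).
  case: (zero_one (- m%:R)) => // /(negligibleP _ (measurableC (mX _))).
  by move=> /nullm.
exists n%:R => a null_a; rewrite leNgt; apply/negP => /ltW na.
by apply/nulln/(negligibleP _ (mX _)); exact: null_level_le na null_a.
Qed.

Lemma ae_eq_cst_of_zero_one_levels : exists c, {ae P, forall w, X w = c}.
Proof.
exists (sup null_level); set c := sup null_level.
have e_gt0 k : 0 < k.+1%:R^-1 :> R by rewrite invr_gt0.
pose below k := [set w | X w <= c - k.+1%:R^-1].
pose above k := ~` [set w | X w <= c + k.+1%:R^-1].
apply: (negligibleS _ (negligible_bigcup (F := fun k => below k `|` above k) _)).
  move=> w /= Xwc; case: (ltgtP (X w) c) => [lt|gt|//].
  + have [k ltk] := ltr_add_invr lt; exists k => //; left.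
    by rewrite /below /=; move: (k.+1%:R^-1) ltk => e; lra.
  + have [k ltk] := ltr_add_invr gt; exists k => //; right.
    by rewrite /above /=; move: (k.+1%:R^-1) ltk => e; lra.
move=> k; rewrite /below /above.
apply: negligibleU.
- apply/(negligibleP _ (mX _)).
  have [a null_a lt_a] := sup_adherent (e_gt0 k) has_sup_null_level.
  exact: null_level_le (ltW lt_a) null_a.
- apply/(negligibleP _ (measurableC (mX _))).
  case: (zero_one (c + k.+1%:R^-1)) => // null_a.
  have := sup_upper_bound has_sup_null_level null_a; rewrite -/c => ce_le_c.
  by exfalso; have := e_gt0 k; move: (k.+1%:R^-1) ce_le_c => e; lra.
Qed.

End zero_one_levels.

(** * Flows on marked trees *)

Section tree.
Variable R : realType.
Implicit Types (t : lab R) (nu : word -> nat).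

Lemma in_tree_ext nu nu' x : nu =1 nu' -> in_tree nu x = in_tree nu' x.
Proof.
elim: x nu nu' => [//|i y IH] nu nu' e /=.
by rewrite e (IH _ (fun z => nu' (i :: z))) // => z; exact: e.
Qed.

Lemma in_tree_cat nu v y :
  in_tree nu (v ++ y) = in_tree nu v && in_tree (fun z => nu (v ++ z)) y.
Proof. by elim: v nu => [//|i v IH] nu /=; rewrite IH andbA. Qed.

Lemma in_tree_prune t v : in_tree (prune t).1 v = in_tree t.1 v.
Proof.
elim: v t => [//|i y IH] t /=; case: (0 < i <= t.1 [::])%N => //=.
by rewrite -(IH (subtree t [:: i])); apply: in_tree_ext.
Qed.

Lemma subtree_prune t v :
  in_tree t.1 v -> subtree (prune t) v = prune (subtree t v).
Proof.
move=> tv; rewrite /subtree /prune /=.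
by congr pair; apply: funext => y; rewrite in_tree_cat tv.
Qed.

Lemma in_tree_child nu i : in_tree nu [:: i] = (0 < i <= nu [::])%N.
Proof. by rewrite /= andbT. Qed.

End tree.

Section flow.
Variables (R : realType) (phi phi' : lab R -> R).

Lemma flow_of_child (f : lab R -> R) t i :
  flow_of f t [:: i] =
  f (subtree t [:: i]) / \sum_(1 <= j < (t.1 [::]).+1) f (subtree t [:: j]).
Proof. by rewrite /= mulr1. Qed.

Lemma flow_of_proportional (c : R) t : c != 0 ->
  (forall v, in_tree t.1 v -> phi' (subtree t v) = c * phi (subtree t v)) ->
  forall x, in_tree t.1 x -> flow_of phi t x = flow_of phi' t x.
Proof.
move=> c0 + x; elim: x t => [//|i y IH] t prop /= /andP[ti ty].
rewrite (IH (subtree t [:: i])) //; last first.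
  by move=> v tv; apply: (prop (i :: v)); rewrite /= ti.
have prop_child j : (0 < j <= t.1 [::])%N ->
    phi' (subtree t [:: j]) = c * phi (subtree t [:: j]).
  by move=> tj; apply: prop; rewrite in_tree_child.
have -> : \sum_(1 <= j < (t.1 [::]).+1) phi' (subtree t [:: j]) =
    c * \sum_(1 <= j < (t.1 [::]).+1) phi (subtree t [:: j]).
  by rewrite mulr_sumr; apply: eq_big_nat => j /andP[j1 j2]; rewrite prop_child
    // j1 -ltnS.
by rewrite prop_child // invfM mulrACA divff // mul1r.
Qed.

Hypotheses (phi_gt0 : forall t, 0 < phi t) (phi'_gt0 : forall t, 0 < phi' t).

Lemma sum_children_gt0 (f : lab R -> R) t : (forall t, 0 < f t) ->
  (0 < t.1 [::])%N -> 0 < \sum_(1 <= j < (t.1 [::]).+1) f (subtree t [:: j]).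
Proof.
move=> f_gt0 t0; rewrite big_ltn ?ltnS //.
by apply: ltr_pwDl => //; apply: sumr_ge0 => j _; exact: ltW.
Qed.

(* Both ratios equal the ratio of the two normalising sums. *)
Lemma flow_of_eq_ratio t i j :
  (0 < i <= t.1 [::])%N -> (0 < j <= t.1 [::])%N ->
  flow_of phi t [:: i] = flow_of phi' t [:: i] ->
  flow_of phi t [:: j] = flow_of phi' t [:: j] ->
  phi' (subtree t [:: i]) / phi (subtree t [:: i]) =
  phi' (subtree t [:: j]) / phi (subtree t [:: j]).
Proof.
move=> /andP[i0 it] tj; rewrite !flow_of_child.
set S := \sum_(1 <= k < (t.1 [::]).+1) phi (subtree t [:: k]).
set S' := \sum_(1 <= k < (t.1 [::]).+1) phi' (subtree t [:: k]).
have t0 : (0 < t.1 [::])%N by exact: leq_trans i0 it.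
have S_gt0 : 0 < S by exact: sum_children_gt0.
have S'_gt0 : 0 < S' by exact: sum_children_gt0.
have ratio_eq k : phi (subtree t [:: k]) / S = phi' (subtree t [:: k]) / S' ->
    phi' (subtree t [:: k]) / phi (subtree t [:: k]) = S' / S.
  have phik_gt0 := phi_gt0 (subtree t [:: k]).
  move/eqP; rewrite eqr_div ?lt0r_neq0 // => /eqP e.
  by apply/eqP; rewrite eqr_div ?lt0r_neq0 // -e mulrC.
by move=> /ratio_eq -> /ratio_eq ->.
Qed.

End flow.

(** * The measurable space of marked trees *)

HB.instance Definition _ (R : realType) := gen_eqMixin (lab R).
HB.instance Definition _ (R : realType) := gen_choiceMixin (lab R).
HB.instance Definition _ (R : realType) :=
  isPointed.Build (lab R) (fun _ => 0%N, fun _ => 0%R).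

Notation mlab R := (g_sigma_algebraType (@lab_gen R)).

Section measurable_lab.
Variable R : realType.

Lemma measurable_child_count x : measurable_fun setT (fun t : mlab R => t.1 x).
Proof.
move=> _ K _; rewrite setTI.
have -> : (fun t : mlab R => t.1 x) @^-1` K =
    \bigcup_(k in K) [set t : mlab R | t.1 x = k].
  by apply/seteqP; split => [t Kt|t [k Kk /= ->]]; first by exists (t.1 x).
apply: bigcup_measurable => k _; apply: sub_sigma_algebra.
by left; exists x, k.
Qed.

Lemma measurable_mark x : measurable_fun setT (fun t : mlab R => t.2 x).
Proof.
by move=> _ B mB; rewrite setTI; apply: sub_sigma_algebra; right; exists x, B.
Qed.

Lemma measurable_subtree v :
  measurable_fun setT (fun t : mlab R => subtree t v : mlab R).
Proof.
apply: (@measurability _ _ (mlab R) (mlab R) setT _ (@lab_gen R) erefl).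
move=> _ [_ [[x [k ->]]|[x [B [mB ->]]]] <-].
(* [nat] and [bool] carry the discrete sigma-algebra: [I] proves that any set of
   them is measurable. *)
- by have := @measurable_child_count (v ++ x) measurableT [set k] I; rewrite !setTI.
- by have := @measurable_mark (v ++ x) measurableT B mB; rewrite !setTI.
Qed.

Lemma measurable_in_tree x : measurable_fun setT (fun t : mlab R => in_tree t.1 x).
Proof.
apply: (measurable_fun_bool true); rewrite setTI.
elim: x => [|i y IH].
  by rewrite (_ : _ @^-1` _ = setT) //; apply/seteqP; split.
have -> : (fun t : mlab R => in_tree t.1 (i :: y)) @^-1` [set true] =
    (fun t : mlab R => t.1 [::]) @^-1` [set k | (0 < i <= k)%N] `&`
    (fun t : mlab R => subtree t [:: i] : mlab R) @^-1`
      ((fun t : mlab R => in_tree t.1 y) @^-1` [set true]).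
  by apply/seteqP; split => t /= => [/andP[]|[-> ->]].
apply: measurableI.
  by have := @measurable_child_count [::] measurableT [set k | (0 < i <= k)%N] I;
    rewrite setTI.
by have := @measurable_subtree [:: i] measurableT _ IH; rewrite setTI.
Qed.

Lemma measurable_prune : measurable_fun setT (fun t : mlab R => prune t : mlab R).
Proof.
apply: (@measurability _ _ (mlab R) (mlab R) setT _ (@lab_gen R) erefl).
move=> _ [_ [[x [k ->]]|[x [B [mB ->]]]] <-].
- have := measurable_fun_ifT (measurable_in_tree x) (measurable_child_count x)
    (measurable_cst 0%N).
  by move=> /(_ measurableT [set k] I); rewrite setTI.
- have := measurable_fun_ifT (measurable_in_tree x) (measurable_mark x)
    (measurable_cst (0 : R)).
  by move=> /(_ measurableT B mB); rewrite setTI.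
Qed.

Lemma measurable_lab_fun (phi : lab R -> R) :
  lab_measurable phi -> measurable_fun setT (phi : mlab R -> R).
Proof. by move=> mphi _ B mB; rewrite setTI; exact: mphi. Qed.

End measurable_lab.

Section cylinder.
Variable R : realType.
Implicit Types (F : seq (word * bool)) (K : word -> set nat) (B : word -> set R).

(* A coordinate [(x, false)] stands for the child count at [x], [(x, true)] for
   the mark at [x]. *)
Definition cylinder F K B : set (mlab R) :=
  [set t | forall i, i \in F -> if i.2 then B i.1 (t.2 i.1) else K i.1 (t.1 i.1)].

Definition cylinders (I : set (word * bool)) : set (set (mlab R)) :=
  [set S | exists F K B, [/\ forall i, i \in F -> I i,
     forall x, measurable (B x) & S = cylinder F K B]].

Lemma cylinder_undup F K B : cylinder (undup F) K B = cylinder F K B.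
Proof.
by apply/seteqP; split => t tF i iF; apply: tF; rewrite ?mem_undup in iF *.
Qed.

Lemma cylinder1 i K B : cylinder [:: i] K B =
  [set t | if i.2 then B i.1 (t.2 i.1) else K i.1 (t.1 i.1)].
Proof.
apply/seteqP; split => t; first by apply; rewrite mem_seq1.
by move=> ti j; rewrite mem_seq1 => /eqP ->.
Qed.

Lemma measurable_cylinder F K B :
  (forall x, measurable (B x)) -> measurable (cylinder F K B).
Proof.
move=> mB; elim: F => [|i F IH].
  by rewrite (_ : cylinder _ _ _ = setT) //; apply/seteqP; split.
rewrite (_ : cylinder _ _ _ = cylinder [:: i] K B `&` cylinder F K B); last first.
  apply/seteqP; split => [t tiF|t [ti tF] j].
    split => j jF; apply: tiF; last by rewrite in_cons jF orbT.
    by move: jF; rewrite mem_seq1 => /eqP ->; exact: mem_head.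
  by rewrite in_cons => /orP[ji|jF]; [apply: ti; rewrite mem_seq1|exact: tF].
apply: measurableI => //; rewrite cylinder1; case: i => x [].
- by have := @measurable_mark R x measurableT _ (mB x); rewrite setTI.
- by have := @measurable_child_count R x measurableT (K x) I; rewrite setTI.
Qed.

Lemma cylinders_measurable I : cylinders I `<=` measurable.
Proof. by move=> _ [F [K [B [_ mB ->]]]]; exact: measurable_cylinder. Qed.

Lemma cylinders_setT I : cylinders I setT.
Proof.
exists [::], (fun=> setT), (fun=> setT); split => //.
by apply/seteqP; split => t // _ i; rewrite in_nil.
Qed.

Lemma cylinders_sub I J : I `<=` J -> cylinders I `<=` cylinders J.
Proof.
by move=> IJ _ [F [K [B [FI mB ->]]]]; exists F, K, B; split => // i /FI /IJ.
Qed.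

Definition merge_bases (T : Type) (b : bool) F1 F2 (A1 A2 : word -> set T) x :=
  (if (x, b) \in F1 then A1 x else setT) `&` (if (x, b) \in F2 then A2 x else setT).

Lemma cylinder_setI F1 F2 K1 K2 B1 B2 :
  cylinder F1 K1 B1 `&` cylinder F2 K2 B2 =
  cylinder (F1 ++ F2) (merge_bases false F1 F2 K1 K2) (merge_bases true F1 F2 B1 B2).
Proof.
rewrite /merge_bases; apply/seteqP; split => t.
  move=> [t1 t2] [x b] _ /=; have {}t1 := t1 (x, b); have {}t2 := t2 (x, b).
  by case: b t1 t2 => /= t1 t2; split; case: ifP => // xF; by [apply: t1|apply: t2].
move=> t12; split => [[x b] xF|[x b] xF].
  have := t12 (x, b); rewrite mem_cat xF => /(_ isT).
  by case: b xF => /= ->; case.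
have := t12 (x, b); rewrite mem_cat xF orbT => /(_ isT).
by case: b xF => /= ->; case.
Qed.

Lemma cylinders_setI I : setI_closed (cylinders I).
Proof.
move=> _ _ [F1 [K1 [B1 [I1 mB1 ->]]]] [F2 [K2 [B2 [I2 mB2 ->]]]].
exists (F1 ++ F2), (merge_bases false F1 F2 K1 K2), (merge_bases true F1 F2 B1 B2).
split; last exact: cylinder_setI.
- by move=> i; rewrite mem_cat => /orP[/I1|/I2].
- by move=> x; apply: measurableI; case: ifP.
Qed.

Lemma measurable_cylinders : @measurable _ (mlab R) = <<s cylinders setT >>.
Proof.
apply/seteqP; split; apply: smallest_sub; first exact: smallest_sigma_algebra.
- move=> _ [[x [k ->]]|[x [B [mB ->]]]]; apply: sub_sigma_algebra.
  + exists [:: (x, false)], (fun=> [set k]), (fun=> setT).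
    by split => //; rewrite cylinder1.
  + exists [:: (x, true)], (fun=> setT), (fun=> B).
    by split => //; rewrite cylinder1.
- exact: sigma_algebra_measurable.
- exact: cylinders_measurable.
Qed.

End cylinder.

(** * The Galton-Watson tree *)

Section gw_family.
Context (R : realType) (d : measure_display) (Omega : measurableType d)
  (P : probability Omega R) (p : nat -> R) (N : word -> Omega -> nat)
  (G : word -> Omega -> R).
Hypothesis mN : forall x k, measurable [set w | N x w = k].
Hypothesis mG : forall x, measurable_fun setT (G x).
Hypothesis PN : forall x k, P [set w | N x w = k] = (p k)%:E.
Hypothesis PG : forall x (B : set R), measurable B ->
  P (G x @^-1` B) = P (G [::] @^-1` B).
Hypothesis indep : mutually_independent P (gw_sigma N G).

Definition gw_lab (u : word) (w : Omega) : mlab R :=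
  (fun x => N (u ++ x) w, fun x => G (u ++ x) w).

Lemma subtree_gw_tree w v : in_tree (gw_tree N G w).1 v ->
  subtree (gw_tree N G w) v = prune (gw_lab v w).
Proof. by rewrite in_tree_prune; exact: subtree_prune. Qed.

Let child_count_bigcup x (K : set nat) :
  N x @^-1` K = \bigcup_(k in K) [set w | N x w = k].
Proof.
by apply/seteqP; split => [w Kw|w [k Kk /= ->]]; first by exists (N x w).
Qed.

Lemma measurable_child_count_event x K : measurable (N x @^-1` K).
Proof. by rewrite child_count_bigcup; apply: bigcup_measurable => k _. Qed.

Lemma prob_child_count x K : P (N x @^-1` K) = P (N [::] @^-1` K).
Proof.
have sum_counts y : P (N y @^-1` K) = (\sum_(k <oo | k \in K) (p k)%:E)%E.
  rewrite child_count_bigcup measure_bigcup //.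
    by apply: eq_eseriesr => k _; exact: PN.
  apply/trivIsetP => i j _ _ ij; apply/seteqP; split => // w [/= -> Nyw].
  by move/eqP: ij; rewrite Nyw.
by rewrite !sum_counts.
Qed.

Lemma measurable_gw_lab u : measurable_fun setT (gw_lab u).
Proof.
apply: (@measurability _ _ Omega (mlab R) setT _ (@lab_gen R) erefl).
move=> _ [_ [[x [k ->]]|[x [B [mB ->]]]] <-]; rewrite setTI; first exact: mN.
by have := mG (u ++ x) measurableT mB; rewrite setTI.
Qed.

Lemma measurable_gw_lab_preimage u (S : set (mlab R)) :
  measurable S -> measurable (gw_lab u @^-1` S).
Proof. by move=> mS; rewrite -[X in measurable X]setTI; exact: measurable_gw_lab. Qed.

Definition coord_event u (K : word -> set nat) (B : word -> set R)
  (i : word * bool) : set Omega :=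
  if i.2 then G (u ++ i.1) @^-1` B i.1 else N (u ++ i.1) @^-1` K i.1.

Lemma prob_coord_event u K B i :
  measurable (B i.1) -> P (coord_event u K B i) = P (coord_event [::] K B i).
Proof.
case: i => x [] /= mB; first by rewrite PG // (PG x).
by rewrite prob_child_count (prob_child_count x).
Qed.

(* The coordinates of [gw_lab u] are coordinates [u ++ x] of the family, which
   are independent and distributed as the coordinates [x]. *)
Lemma prob_gw_lab_cylinder u F K B : uniq F -> (forall x, measurable (B x)) ->
  P (gw_lab u @^-1` cylinder F K B) =
  (\prod_(i <- F) fine (P (coord_event [::] K B i)))%:E.
Proof.
move=> uF mB.
pose sh (i : word * bool) := (u ++ i.1, i.2).
have sh_inj : injective sh.
  move=> [a b] [a' b'] [] /(congr1 (drop (size u))).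
  by rewrite !drop_size_cat // => -> ->.
pose A (j : word * bool) := if j.2 then G j.1 @^-1` B (drop (size u) j.1)
  else N j.1 @^-1` K (drop (size u) j.1).
have A_sh i : A (sh i) = coord_event u K B i.
  by rewrite /A /sh /coord_event /= drop_size_cat.
have A_sigma j : j \in map sh F -> gw_sigma N G j (A j).
  by case: j => y [] _; rewrite /gw_sigma /A /=; [exists (B (drop (size u) y))|
    exists (K (drop (size u) y))].
have cylE : gw_lab u @^-1` cylinder F K B = \bigcap_(j in [set` map sh F]) A j.
  apply/seteqP; split => w.
  - move=> wF _ /mapP[i iF ->]; rewrite A_sh.
    by have := wF i iF; case: i {iF} => x [].
  - move=> wA i iF; have := wA (sh i) (map_f sh iF); rewrite A_sh.
    by case: i {iF} => x [].
rewrite -[LHS]fineK; last by apply/fin_num_measure/measurable_gw_lab_preimage;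
  exact: measurable_cylinder.
rewrite cylE (@indep (map sh F) A) ?map_inj_uniq //.
rewrite big_map; congr (_%:E); apply: eq_bigr => i _.
by rewrite A_sh prob_coord_event.
Qed.

Lemma gw_lab_law u (S : set (mlab R)) : measurable S ->
  P (gw_lab u @^-1` S) = P (gw_lab [::] @^-1` S).
Proof.
move=> mS.
apply: (measure_unique (cylinders setT) (fun=> setT) (@measurable_cylinders R)
  (@cylinders_setI R setT) (fun=> cylinders_setT _ _)
  _ (pushforward P (gw_lab u)) (pushforward P (gw_lab [::]))) => //.
(* The measure instance of [pushforward] is parameterised by the measurability
   of the map, hence the extra goals and hypotheses below. *)
- by apply/seteqP; split => // w _; exists 0%N.
- exact: measurable_gw_lab.
- exact: measurable_gw_lab.
- move=> mfu mf0 _ [F [K [B [_ mB ->]]]]; rewrite -cylinder_undup.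
  exact: etrans (@prob_gw_lab_cylinder u _ K _ (undup_uniq F) mB)
    (esym (@prob_gw_lab_cylinder [::] _ K _ (undup_uniq F) mB)).
- move=> mfu _; rewrite /pushforward.
  have := fin_num_measure P _ (measurable_gw_lab_preimage u (@measurableT _ (mlab R))).
  by move/fin_numPlt => /andP[].
Qed.

Lemma ae_gw_lab (S : set (mlab R)) u : measurable S ->
  {ae P, forall w, S (gw_lab [::] w)} -> {ae P, forall w, S (gw_lab u w)}.
Proof.
move=> mS; have mSc := measurable_gw_lab_preimage _ (measurableC mS).
move=> /(negligibleP _ (mSc [::])) S0; apply/(negligibleP _ (mSc u)).
change (P (gw_lab u @^-1` ~` S) = 0%E).
by rewrite gw_lab_law //; exact: measurableC.
Qed.

Definition gw_cylinders (I : set (word * bool)) : set (set Omega) :=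
  [set gw_lab [::] @^-1` S | S in cylinders I].

Lemma gw_cylinders_measurable I : gw_cylinders I `<=` measurable.
Proof.
move=> _ [S IS <-]; apply: measurable_gw_lab_preimage => //.
exact: cylinders_measurable IS.
Qed.

Lemma gw_cylinders_setT I : gw_cylinders I setT.
Proof. by exists setT; [exact: cylinders_setT|rewrite preimage_setT]. Qed.

Lemma gw_cylinders_setI I : setI_closed (gw_cylinders I).
Proof.
move=> _ _ [S1 IS1 <-] [S2 IS2 <-]; rewrite -preimage_setI.
by exists (S1 `&` S2) => //; exact: cylinders_setI.
Qed.

Lemma gw_cylinders_indep I J : (forall i, I i -> J i -> False) ->
  forall A B, gw_cylinders I A -> gw_cylinders J B -> P (A `&` B) = (P A * P B)%E.
Proof.
move=> IJ _ _ [_ [F1 [K1 [B1 [I1 mB1 ->]]]] <-] [_ [F2 [K2 [B2 [I2 mB2 ->]]]] <-].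
rewrite -preimage_setI -(cylinder_undup F1) -(cylinder_undup F2) cylinder_setI.
have disj i : i \in undup F1 -> i \in undup F2 -> False.
  by rewrite !mem_undup => /I1 + /I2; exact: IJ.
have uF12 : uniq (undup F1 ++ undup F2).
  rewrite cat_uniq !undup_uniq andbT /=; apply/hasPn => i iF2; apply/negP => iF1.
  exact: disj iF1 iF2.
have mB12 x : measurable (merge_bases true (undup F1) (undup F2) B1 B2 x).
  by apply: measurableI; case: ifP.
rewrite !prob_gw_lab_cylinder ?undup_uniq // -EFinM big_cat /=.
congr (_%:E); congr (_ * _); apply: eq_big_seq => -[x b] xF.
- have xF2 : (x, b) \notin undup F2 by apply/negP; exact: disj xF.
  by rewrite /coord_event /merge_bases; case: b xF xF2 => /= -> /negbTE ->;
    rewrite setIT.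
- have xF1 : (x, b) \notin undup F1 by apply/negP => /disj; apply.
  by rewrite /coord_event /merge_bases; case: b xF xF1 => /= -> /negbTE ->;
    rewrite setTI.
Qed.

Lemma gw_sigma_indep I J : (forall i, I i -> J i -> False) ->
  forall A B, <<s gw_cylinders I >> A -> <<s gw_cylinders J >> B ->
  P (A `&` B) = (P A * P B)%E.
Proof.
move=> IJ; apply: g_sigma_indep => //; by [exact: gw_cylinders_measurable|
  exact: gw_cylinders_setI|exact: gw_cylinders_setT|exact: gw_cylinders_indep].
Qed.

Lemma gw_cylinders_g_sigma_sub I J :
  I `<=` J -> <<s gw_cylinders I >> `<=` <<s gw_cylinders J >>.
Proof.
move=> IJ; apply: sub_smallest2r; first exact: smallest_sigma_algebra.
by move=> _ [S IS <-]; exists S => //; exact: cylinders_sub IS.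
Qed.

Definition descendants (u : word) : set (word * bool) :=
  [set i | exists x, i.1 = u ++ x].

Lemma gw_lab_preimage_g_sigma u (S : set (mlab R)) : measurable S ->
  <<s gw_cylinders (descendants u) >> (gw_lab u @^-1` S).
Proof.
move=> mS.
have : preimage_set_system setT (gw_lab u) measurable (gw_lab u @^-1` S).
  by exists S => //; rewrite setTI.
rewrite -g_sigma_preimageE; apply: smallest_sub; first exact: smallest_sigma_algebra.
move=> _ [_ [[x [k ->]]|[x [B [mB ->]]]] <-]; apply: sub_sigma_algebra; rewrite setTI.
- exists (cylinder [:: (u ++ x, false)] (fun=> [set k]) (fun=> setT)).
    exists [:: (u ++ x, false)], (fun=> [set k]), (fun=> setT); split => //.
    by move=> i; rewrite mem_seq1 => /eqP ->; exists x.
  by rewrite cylinder1.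
- exists (cylinder [:: (u ++ x, true)] (fun=> setT) (fun=> B)).
    exists [:: (u ++ x, true)], (fun=> setT), (fun=> B); split => //.
    by move=> i; rewrite mem_seq1 => /eqP ->; exists x.
  by rewrite cylinder1.
Qed.

Lemma root_count_g_sigma (K : set nat) :
  <<s gw_cylinders [set ([::], false)] >> (N [::] @^-1` K).
Proof.
apply: sub_sigma_algebra; exists (cylinder [:: ([::], false)] (fun=> K) (fun=> setT)).
  exists [:: ([::], false)], (fun=> K), (fun=> setT); split => //.
  by move=> i; rewrite mem_seq1 => /eqP ->.
by rewrite cylinder1.
Qed.

Lemma prob_children_root (S1 S2 : set (mlab R)) (K : set nat) :
  measurable S1 -> measurable S2 ->
  P (gw_lab [:: 1%N] @^-1` S1 `&` gw_lab [:: 2%N] @^-1` S2 `&` N [::] @^-1` K) =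
  (P (gw_lab [::] @^-1` S1) * P (gw_lab [::] @^-1` S2) * P (N [::] @^-1` K))%E.
Proof.
move=> mS1 mS2.
have disj12 i : descendants [:: 1%N] i -> descendants [:: 2%N] i -> False.
  by move=> [x ix] [y]; rewrite ix => -[].
have disj_root i : (descendants [:: 1%N] `|` descendants [:: 2%N]) i ->
    [set ([::], false)] i -> False.
  by move=> [[x ix]|[x ix]] /= i0; rewrite i0 in ix.
have sS1 := @gw_lab_preimage_g_sigma [:: 1%N] _ mS1.
have sS2 := @gw_lab_preimage_g_sigma [:: 2%N] _ mS2.
have sS12 : <<s gw_cylinders (descendants [:: 1%N] `|` descendants [:: 2%N]) >>
    (gw_lab [:: 1%N] @^-1` S1 `&` gw_lab [:: 2%N] @^-1` S2).
  apply: (@measurableI _ (g_sigma_algebraType _)).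
    exact: gw_cylinders_g_sigma_sub (@subsetUl _ _ _) _ sS1.
  exact: gw_cylinders_g_sigma_sub (@subsetUr _ _ _) _ sS2.
rewrite (gw_sigma_indep disj_root sS12 (root_count_g_sigma K)).
by rewrite (gw_sigma_indep disj12 sS1 sS2) !gw_lab_law.
Qed.

Hypotheses (p0 : p 0%N = 0) (p1 : p 1%N < 1).

Lemma prob_root_count_ge2 : P (N [::] @^-1` [set k | (2 <= k)%N]) != 0%E.
Proof.
have -> : N [::] @^-1` [set k | (2 <= k)%N] =
    ~` ([set w | N [::] w = 0%N] `|` [set w | N [::] w = 1%N]).
  apply/seteqP; split => w /=; first by case: (N [::] w) => [|[|n]] //= _ [].
  by case: (N [::] w) => [|[|n]] //= N01; exfalso; apply: N01; [left|right].
rewrite probability_setC; last exact: measurableU.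
have -> : P ([set w | N [::] w = 0%N] `|` [set w | N [::] w = 1%N]) =
    (P [set w | N [::] w = 0%N] + P [set w | N [::] w = 1%N])%E.
  by apply: measureU => //; apply/seteqP; split => // w [/= ->].
by rewrite !PN p0 add0e -EFinB eqe subr_eq0 eq_sym lt_eqF.
Qed.

Variables phi phi' : lab R -> R.
Hypotheses (mphi : lab_measurable phi) (mphi' : lab_measurable phi').
Hypotheses (phi_gt0 : forall t, 0 < phi t) (phi'_gt0 : forall t, 0 < phi' t).

(* Taken on the pruned labelling, so that [ratio (gw_lab v w)] is the ratio at
   the subtree rooted at the vertex [v]. *)
Definition ratio (t : mlab R) : R := phi' (prune t) / phi (prune t).

Let measurable_prune_comp f :
  lab_measurable f -> measurable_fun setT (fun t : mlab R => f (prune t)).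
Proof.
by move=> mf; exact: measurableT_comp (measurable_lab_fun mf) (@measurable_prune R).
Qed.

Lemma measurable_ratio_le a : measurable [set t : mlab R | ratio t <= a].
Proof.
have -> : [set t : mlab R | ratio t <= a] =
    (fun t : mlab R => phi' (prune t) <= a * phi (prune t)) @^-1` [set true].
  by apply/seteqP; split => t; rewrite /= /ratio ler_pdivrMr // mulrC.
have := measurable_fun_ler (measurable_prune_comp mphi')
  (measurable_funM (measurable_cst a) (measurable_prune_comp mphi)).
by move=> /(_ measurableT [set true] I); rewrite setTI.
Qed.

Lemma measurable_proportional c :
  measurable [set t : mlab R | phi' (prune t) = c * phi (prune t)].
Proof.
have -> : [set t : mlab R | phi' (prune t) = c * phi (prune t)] =
    (fun t : mlab R => phi' (prune t) == c * phi (prune t)) @^-1` [set true].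
  by apply/seteqP; split => t /= /eqP.
have := measurable_fun_eqr (measurable_prune_comp mphi')
  (measurable_funM (measurable_cst c) (measurable_prune_comp mphi)).
by move=> /(_ measurableT [set true] I); rewrite setTI.
Qed.

Definition gw_flows_agree (w : Omega) : Prop :=
  forall x, in_tree (gw_tree N G w).1 x ->
    flow_of phi (gw_tree N G w) x = flow_of phi' (gw_tree N G w) x.

Lemma gw_flows_agree_ratio w : gw_flows_agree w -> (2 <= N [::] w)%N ->
  ratio (gw_lab [:: 1%N] w) = ratio (gw_lab [:: 2%N] w).
Proof.
move=> agree N2; have t1 : (0 < 1 <= (gw_tree N G w).1 [::])%N by exact: ltnW.
have t2 : (0 < 2 <= (gw_tree N G w).1 [::])%N by [].
rewrite /ratio -!subtree_gw_tree ?in_tree_child //.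
by apply: flow_of_eq_ratio => //; apply: agree; rewrite in_tree_child.
Qed.

(* The event {ratio of the first subtree <= a < ratio of the second subtree,
   root degree >= 2} is null, while by independence its probability is
   P(ratio <= a) P(ratio > a) P(root degree >= 2). *)
Lemma ratio_zero_one : {ae P, forall w, gw_flows_agree w} -> forall a,
  P [set w | ratio (gw_lab [::] w) <= a] = 0%E \/
  P (~` [set w | ratio (gw_lab [::] w) <= a]) = 0%E.
Proof.
move=> agree a; set S := [set t : mlab R | ratio t <= a].
have mS : measurable S := measurable_ratio_le a.
have mE : measurable (gw_lab [:: 1%N] @^-1` S `&` gw_lab [:: 2%N] @^-1` (~` S)
    `&` N [::] @^-1` [set k | (2 <= k)%N]).
  apply: measurableI; last exact: measurable_child_count_event.
  by apply: measurableI; apply: measurable_gw_lab_preimage => //; exact: measurableC.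
have /(negligibleP _ mE) : P.-negligible (gw_lab [:: 1%N] @^-1` S `&`
    gw_lab [:: 2%N] @^-1` (~` S) `&` N [::] @^-1` [set k | (2 <= k)%N]).
  apply: negligibleS agree => w [[inS1 notinS2] N2] agree_w.
  by apply: notinS2; rewrite /S /= -gw_flows_agree_ratio.
move=> E0; have /eqP := etrans (esym (prob_children_root
  [set k | (2 <= k)%N] mS (measurableC mS))) E0.
rewrite !mule_eq0 (negbTE prob_root_count_ge2) orbF.
by case/orP => /eqP; [left|right].
Qed.

Lemma ae_ratio_cst : {ae P, forall w, gw_flows_agree w} ->
  exists2 c, 0 < c & {ae P, forall w, ratio (gw_lab [::] w) = c}.
Proof.
move=> agree.
have [c ae_c] := ae_eq_cst_of_zero_one_levels (fun a => measurable_gw_lab_preimage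
  [::] (measurable_ratio_le a)) (ratio_zero_one agree).
exists c => //; have [w <-] := ae_exists ae_c.
by rewrite divr_gt0.
Qed.

Lemma gw_flows_agree_proportional : {ae P, forall w, gw_flows_agree w} ->
  exists c : R, 0 < c /\
    {ae P, forall w, phi' (gw_tree N G w) = c * phi (gw_tree N G w)}.
Proof.
move=> /ae_ratio_cst[c c_gt0 ae_c]; exists c; split => //.
by apply: filterS ae_c => w <-; rewrite /ratio divfK ?lt0r_neq0.
Qed.

(* Proportionality at the root transfers to every vertex, since each subtree
   is distributed as the whole tree and there are countably many vertices. *)
Lemma proportional_gw_flows_agree c : 0 < c ->
  {ae P, forall w, phi' (gw_tree N G w) = c * phi (gw_tree N G w)} ->
  {ae P, forall w, gw_flows_agree w}.
Proof.
move=> c_gt0 prop_root.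
have prop_at v : {ae P, forall w,
    phi' (prune (gw_lab v w)) = c * phi (prune (gw_lab v w))}.
  exact: (@ae_gw_lab [set t | phi' (prune t) = c * phi (prune t)] v
    (measurable_proportional c) prop_root).
have prop_all : {ae P, forall w, forall n, let v := odflt [::] (unpickle n) in
    phi' (prune (gw_lab v w)) = c * phi (prune (gw_lab v w))}.
  by apply: ae_foralln => n; exact: prop_at.
apply: filterS prop_all => w prop_w x tx.
apply: (flow_of_proportional (lt0r_neq0 c_gt0)) => // v tv.
by have := prop_w (pickle v); rewrite pickleK subtree_gw_tree.
Qed.

End gw_family.

Unset Implicit Arguments.

Theorem mainTheorem2 (R : realType) (d : measure_display)
  (Omega : measurableType d) (P : probability Omega R)
  (p : nat -> R) (N : word -> Omega -> nat) (G : word -> Omega -> R)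
  (phi phi' : lab R -> R) :
  (* reproduction law p: p_0 = 0, p_1 < 1, finite mean *)
  p 0%N = 0 -> p 1%N < 1 ->
  (exists M : R, forall n, \sum_(k < n) (k%:R * p k) <= M) ->
  (* Ulam-Harris family: N x ~ p, G x ~ Gamma := G [::] (i.i.d., >= 0),
     all mutually independent *)
  (forall x k, measurable [set w | N x w = k]) ->
  (forall x, measurable_fun setT (G x)) ->
  (forall x k, P [set w | N x w = k] = (p k)%:E) ->
  (forall x w, 0 <= G x w) ->
  (forall x (B : set R), measurable B ->
     P (G x @^-1` B) = P (G [::] @^-1` B)) ->
  mutually_independent P (gw_sigma N G) ->
  (* phi, phi' positive measurable *)
  lab_measurable phi -> lab_measurable phi' ->
  (forall t, 0 < phi t) -> (forall t, 0 < phi' t) ->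
  ({ae P, forall w, forall x, in_tree (gw_tree N G w).1 x ->
      flow_of phi (gw_tree N G w) x = flow_of phi' (gw_tree N G w) x}
   <->
   exists c : R, 0 < c /\
     {ae P, forall w, phi' (gw_tree N G w) = c * phi (gw_tree N G w)}).
Proof.
move=> p0 p1 _ mN mG PN _ PG indep mphi mphi' phi_gt0 phi'_gt0.
have flows_prop := gw_flows_agree_proportional mN mG PN PG indep p0 p1 mphi mphi'
  phi_gt0 phi'_gt0.
have prop_flows := proportional_gw_flows_agree mN mG PN PG indep mphi mphi'.
by split=> [/flows_prop|[c [/prop_flows]]].
Qed.
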